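(* Let $T^X$ and $T^Y$ be stable trees marked by finite sets $X$ and $Y$, and suppose $T^X$ is compatible with $T^Y$. If an internal vertex $v$ of $T^Y$ separates three vertices of $T^X$, then $v$ is a vertex of $T^X$.
   Context: A tree is a finite connected graph without cycles (vertex set $V$, edges $2$-element subsets of $V$); leaves are vertices of valence $1$, the others internal vertices ($IV$); the tree is stable if every internal vertex has valence at least $3$. A tree marked by a finite set $X$ is a tree whose set of leaves is $X$. In a tree $T$, a vertex $v$ separates vertices $v_1,v_2,v_3$ if $v_1,v_2,v_3$ lie in three distinct connected components of $T\setminus\{v\}$. A tree $T^X$ is compatible with a tree $T^Y$ if (1) $X\subseteq Y$ and $IV^X\subseteq IV^Y$ (so every vertex of $T^X$ is a vertex of $T^Y$), and (2) for all vertices $v,v_1,v_2,v_3$ of $T^X$, $v$ separates $v_1,v_2,v_3$ in $T^X$ if and only if $v$ separates $v_1,v_2,v_3$ in $T^Y$. *)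

(* A (finite) graph is given by a vertex set A : {set V}
   inside an ambient finite type V, and a boolean edge relation e : rel V
   (edges = 2-element subsets {x,y} with e x y). *)
From mathcomp Require Import all_boot.
Set Implicit Arguments. Unset Strict Implicit. Unset Printing Implicit Defensive.

Section Trees.
Variable V : finType.

Definition simple_graph (A : {set V}) (e : rel V) : Prop :=
  [/\ forall x y, e x y = e y x,
      forall x, ~~ e x x &
      forall x y, e x y -> (x \in A) && (y \in A)].

Definition connected_in (B : {set V}) (e : rel V) (x y : V) : Prop :=
  exists p : seq V, [/\ x \in B, all (fun z => z \in B) p, path e x p & last x p = y].

Definition has_cycle (A : {set V}) (e : rel V) : Prop :=
  exists c : seq V, [/\ 3 <= size c, all (fun z => z \in A) c, uniq c & cycle e c].

Definition is_tree (A : {set V}) (e : rel V) : Prop :=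
  [/\ simple_graph A e, A != set0,
      (forall x y, x \in A -> y \in A -> connected_in A e x y) &
      ~ has_cycle A e].

Definition valence (e : rel V) (v : V) : nat := #|[set u | e v u]|.

Definition leaves (A : {set V}) (e : rel V) : {set V} :=
  [set v in A | valence e v == 1].

Definition internals (A : {set V}) (e : rel V) : {set V} :=
  [set v in A | valence e v != 1].

Definition stable_tree (A : {set V}) (e : rel V) : Prop :=
  is_tree A e /\ forall v, v \in internals A e -> 3 <= valence e v.

Definition marked_tree (A : {set V}) (e : rel V) (X : {set V}) : Prop :=
  is_tree A e /\ leaves A e = X.

Definition separates (A : {set V}) (e : rel V) (v v1 v2 v3 : V) : Prop :=
  [/\ v \in A, v1 \in A :\ v, v2 \in A :\ v, v3 \in A :\ v &
      [/\ ~ connected_in (A :\ v) e v1 v2,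
          ~ connected_in (A :\ v) e v1 v3 &
          ~ connected_in (A :\ v) e v2 v3]].

Definition compatible (AX : {set V}) (eX : rel V) (X : {set V})
                      (AY : {set V}) (eY : rel V) (Y : {set V}) : Prop :=
  [/\ X \subset Y, internals AX eX \subset internals AY eY &
      forall v v1 v2 v3, v \in AX -> v1 \in AX -> v2 \in AX -> v3 \in AX ->
        (separates AX eX v v1 v2 v3 <-> separates AY eY v v1 v2 v3)].

End Trees.

From mathcomp Require Import all_boot.
From Stdlib Require Import Classical.
Set Implicit Arguments. Unset Strict Implicit. Unset Printing Implicit Defensive.

(* Let w be the median of v1, v2, v3 in T^X.  If w differs from all three, it
   separates them in T^X, hence in T^Y by compatibility, and in a tree at most
   one vertex separates three given vertices, so w = v.  Otherwise, say w = v1: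
   then v2 and v3 lie in different components of T^X \ w, and stability gives
   w a third branch, so w separates v2, v3 and a third vertex in T^X, hence in
   T^Y.  Thus w lies on the T^Y-path from v2 to v3, and one half of that path
   avoids v, contradicting that v separates w, v2, v3 in T^Y. *)


Section Connectivity.
Variable V : finType.
Implicit Types (B C : {set V}) (e : rel V).

Lemma connected_in_refl B e x : x \in B -> connected_in B e x x.
Proof. by move=> xB; exists [::]. Qed.

Lemma connected_in_mem B e x y : connected_in B e x y -> x \in B /\ y \in B.
Proof.
move=> [p [xB allp _ <-]]; split=> //.
by have := mem_last x p; rewrite inE => /predU1P[->//|/(allP allp)].
Qed.

Lemma connected_in_cons B e x y z :
  e x y -> x \in B -> connected_in B e y z -> connected_in B e x z.
Proof.
move=> exy xB [p [yB allp pp lp]]; exists (y :: p).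
by split=> //=; rewrite ?yB ?exy.
Qed.

Lemma connected_in_trans B e x y z :
  connected_in B e x y -> connected_in B e y z -> connected_in B e x z.
Proof.
move=> [p [xB allp pp lp]] [q [yB allq pq lq]]; exists (p ++ q); split=> //.
- by rewrite all_cat allp allq.
- by rewrite cat_path pp lp pq.
- by rewrite last_cat lp.
Qed.

Lemma connected_in_sym B e x y :
  symmetric e -> connected_in B e x y -> connected_in B e y x.
Proof.
move=> eC [p [xB allp pp <-]]; elim: p x xB allp pp => [|z p IH] x xB /=.
  by move=> _ _; apply: connected_in_refl.
case/andP=> zB allp /andP[exz pp]; apply: connected_in_trans (IH z zB allp pp) _.
by apply: connected_in_cons (connected_in_refl _ xB); rewrite // eC.
Qed.

Lemma connected_in_sub B C e x y :
  B \subset C -> connected_in B e x y -> connected_in C e x y.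
Proof.
move=> /subsetP sBC [p [xB allp pp lp]]; exists p; split=> //; first exact: sBC.
by apply/allP=> z /(allP allp)/sBC.
Qed.

Lemma connected_in_uniq B e x y : connected_in B e x y ->
  exists p, [/\ uniq (x :: p), all (fun z => z \in B) p, path e x p & last x p = y].
Proof.
move=> [p [_ allp pp lp]]; case: (shortenP pp) lp => p' pp' up' sub_p lp.
by exists p'; split=> //; apply/allP=> z /sub_p/(allP allp).
Qed.

Lemma path_first_hit B e (P : pred V) x s :
  x \in B -> all (fun z => z \in B) s -> path e x s -> P (last x s) ->
  P x \/ exists n w, [/\ e n w, P w, ~~ P n &
                         connected_in [set z in B | ~~ P z] e x n].
Proof.
elim: s x => [|y s IH] x xB /=; first by move=> _ _ ->; left.
case/andP=> yB alls /andP[exy ps] Pl.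
have [Px|nPx] := boolP (P x); first by left.
have xB' : x \in [set z in B | ~~ P z] by rewrite inE xB.
right; case: (IH y yB alls ps Pl) => [Py|[n [w [enw Pw nPn cn]]]].
  by exists x, y; split=> //; apply: connected_in_refl.
by exists n, w; split=> //; apply: connected_in_cons exy xB' cn.
Qed.

End Connectivity.

Section Tree.
Variables (V : finType) (A : {set V}) (e : rel V).

Definition in_branch (w n x : V) : Prop :=
  e w n /\ connected_in (A :\ w) e x n.

Hypothesis tree : is_tree A e.

Lemma tree_edgeC : symmetric e.
Proof. by case: tree => [[]]. Qed.

Lemma tree_edge_irr x : ~~ e x x.
Proof. by case: tree => [[]]. Qed.

Lemma tree_edge_mem x y : e x y -> (x \in A) && (y \in A).
Proof. by case: tree => [[_ _ eA]] _ _ _; apply: eA. Qed.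

Lemma tree_connected x y : x \in A -> y \in A -> connected_in A e x y.
Proof. by case: tree => _ _ connA _; apply: connA. Qed.

Lemma neighbors_disconnected a b c :
  e a b -> e a c -> b != c -> ~ connected_in (A :\ a) e b c.
Proof.
move=> eab eac bc /connected_in_uniq [p [up allp pp lp]].
case: tree => _ _ _; apply; exists (a :: b :: p); split.
- by case: p {up allp pp} lp => [|z p] //= lp; rewrite lp eqxx in bc.
- case/andP: (tree_edge_mem eab) => aA bA /=; rewrite aA bA /=.
  by apply/allP=> z /(allP allp); rewrite inE => /andP[].
- rewrite cons_uniq up andbT inE negb_or; apply/andP; split.
    by apply: contraTneq eab => <-; apply: tree_edge_irr.
  by apply/negP=> /(allP allp); rewrite !inE eqxx.
- by rewrite /= eab rcons_path pp lp tree_edgeC eac.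
Qed.

Lemma branches_disconnected w n1 n2 x1 x2 :
  in_branch w n1 x1 -> in_branch w n2 x2 -> n1 != n2 ->
  ~ connected_in (A :\ w) e x1 x2.
Proof.
move=> [e1 c1] [e2 c2] n12 c12; apply: (neighbors_disconnected e1 e2 n12).
apply: connected_in_trans (connected_in_sym tree_edgeC c1) _.
exact: connected_in_trans c12 c2.
Qed.

Lemma path_to_branch x q w :
  x \in A -> all (fun z => z \in A) q -> path e x q -> e (last x q) w ->
  w \notin x :: q -> in_branch w (last x q) x.
Proof.
move=> xA allq pq ew wq; split; first by rewrite tree_edgeC.
exists q; split=> //.
  by rewrite !inE xA andbT; apply: contraNneq wq => ->; rewrite mem_head.
apply/allP=> z zq; rewrite !inE (allP allq _ zq) andbT.
by apply: contraNneq wq => <-; rewrite inE zq orbT.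
Qed.

Lemma path_from_branch w s :
  all (fun z => z \in A) s -> path e w s -> w \notin s -> s != [::] ->
  in_branch w (head w s) (last w s).
Proof.
case: s => [|n s] //= /andP[nA alls] /andP[ewn ps]; rewrite inE negb_or.
case/andP=> wn ws _; split=> //; apply: connected_in_sym tree_edgeC _.
exists s; split=> //; first by rewrite !inE nA andbT eq_sym.
apply/allP=> z zs; rewrite !inE (allP alls _ zs) andbT.
by apply: contraNneq ws => <-.
Qed.

Lemma branch_exists w x : w \in A -> x \in A :\ w -> exists n, in_branch w n x.
Proof.
rewrite !inE => wA /andP[xw xA].
have [p [up allp pp lp]] := connected_in_uniq (tree_connected xA wA).
case/lastP: p up allp pp lp => [|q y]; first by move=> _ _ _ /= xw'; rewrite xw' eqxx in xw.
rewrite last_rcons all_rcons rcons_path -rcons_cons rcons_uniq.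
move=> /andP[yq _] /andP[_ allq] /andP[pq ey] yw; subst y.
by exists (last x q); apply: path_to_branch.
Qed.

Lemma uniq_path_branches x p w :
  x \in A -> uniq (x :: p) -> all (fun z => z \in A) p -> path e x p ->
  w \in x :: p ->
  exists n1 n2, [/\ n1 \in x :: p, n2 \in x :: p,
    x != w -> in_branch w n1 x, last x p != w -> in_branch w n2 (last x p) &
    x != w -> last x p != w -> n1 != n2].
Proof.
move=> xA up allp pp; rewrite inE => /predU1P[wx|wp].
  subst w; have xp : x \notin p by move: up; rewrite cons_uniq => /andP[].
  have hp : head x p \in x :: p by case: (p) => [|z s]; rewrite /= !inE eqxx ?orbT.
  exists x, (head x p); split; rewrite ?eqxx ?mem_head // => lx.
  by apply: path_from_branch => //; apply: contraNneq lx => ->.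
case/splitPr: wp up allp pp => p1 p2 up allp pp.
move: up; rewrite -cat_cons cat_uniq => /and3P[_ /hasPn dis /andP[wp2 _]].
move: allp; rewrite all_cat /= => /and3P[allp1 _ allp2].
move: pp; rewrite cat_path /= => /and3P[pp1 ew pp2].
have wx1 : w \notin x :: p1 by apply: dis; rewrite mem_head.
have hp2 : head w p2 \in w :: p2 by case: (p2) => [|z s]; rewrite /= !inE eqxx ?orbT.
exists (last x p1), (head w p2); rewrite last_cat /=; split.
- by rewrite -cat_cons mem_cat mem_last.
- by rewrite -cat_cons mem_cat hp2 orbT.
- by move=> _; apply: path_to_branch.
- by move=> lw; apply: path_from_branch => //; apply: contraNneq lw => ->.
- by move=> _ _; apply: contraTneq hp2 => <-; apply/negP => /dis; rewrite mem_last.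
Qed.

(* [w] is where the path from [x3] to [x1] first meets the path from [x1] to [x2]. *)
Lemma exists_median x1 x2 x3 : x1 \in A -> x2 \in A -> x3 \in A ->
  exists2 w, w \in A &
    [/\ x1 != w -> x2 != w -> ~ connected_in (A :\ w) e x1 x2,
        x1 != w -> x3 != w -> ~ connected_in (A :\ w) e x1 x3 &
        x2 != w -> x3 != w -> ~ connected_in (A :\ w) e x2 x3].
Proof.
move=> x1A x2A x3A.
have [p [up allp pp lp]] := connected_in_uniq (tree_connected x1A x2A).
have [q [_ allq pq lq]] := tree_connected x3A x1A.
have lqp : last x3 q \in x1 :: p by rewrite lq mem_head.
have [x3p|[n3 [w [en3w wp n3p c3]]]] :=
  path_first_hit (P := fun u => u \in x1 :: p) x3A allq pq lqp.
  have [n1 [n2 [_ _ b1 b2 n12]]] := uniq_path_branches x1A up allp pp x3p.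
  rewrite lp in b2 n12; exists x3 => //.
  split; rewrite ?eqxx //= => h1 h2.
  exact: branches_disconnected (b1 h1) (b2 h2) (n12 h1 h2).
have [n1 [n2 [n1p n2p b1 b2 n12]]] := uniq_path_branches x1A up allp pp wp.
rewrite lp in b2 n12.
have b3 : in_branch w n3 x3.
  split; first by rewrite tree_edgeC.
  apply: connected_in_sub c3; apply/subsetP=> u; rewrite !inE => /andP[uA up'].
  by rewrite uA andbT; apply: contraNneq up' => ->.
have n13 : n1 != n3 by apply: contraNneq n3p => <-.
have n23 : n2 != n3 by apply: contraNneq n3p => <-.
exists w; first by move: wp; rewrite inE => /predU1P[->|/(allP allp)].
split=> h1 h2.
- exact: branches_disconnected (b1 h1) (b2 h2) (n12 h1 h2).
- exact: branches_disconnected (b1 h1) b3 n13.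
- exact: branches_disconnected (b2 h1) b3 n23.
Qed.

Lemma disconnected_split x y z w : x \in A -> y \in A ->
  ~ connected_in (A :\ z) e x y -> w != z ->
  connected_in (A :\ w) e x z \/ connected_in (A :\ w) e z y.
Proof.
move=> xA yA nxy wz.
have [p [up allp pp lp]] := connected_in_uniq (tree_connected xA yA).
have : z \in x :: p.
  apply/negPn/negP => zp; apply: nxy; exists p; split=> //.
    by rewrite !inE xA andbT; apply: contraNneq zp => ->; rewrite mem_head.
  apply/allP=> u up'; rewrite !inE (allP allp _ up') andbT.
  by apply: contraNneq zp => <-; rewrite inE up' orbT.
rewrite inE => /predU1P[zx|zp].
  by left; rewrite zx; apply: connected_in_refl; rewrite !inE xA andbT -zx eq_sym.
case/splitPr: zp up allp pp lp => p1 p2 up allp pp lp.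
move: up; rewrite -cat_cons cat_uniq => /and3P[_ /hasPn dis _].
move: allp; rewrite all_cat /= => /and3P[allp1 zA allp2].
move: pp; rewrite cat_path /= => /and3P[pp1 ez pp2].
rewrite last_cat /= in lp.
have [wl|wr] := boolP (w \in x :: p1).
  right; exists p2; split=> //; first by rewrite !inE zA andbT eq_sym wz.
  apply/allP=> u up2; rewrite !inE (allP allp2 _ up2) andbT.
  by apply: contraTneq wl => <-; apply: dis; rewrite inE up2 orbT.
left; exists (rcons p1 z); split.
- by rewrite !inE xA andbT; apply: contraNneq wr => ->; rewrite mem_head.
- rewrite all_rcons !inE zA eq_sym wz /=.
  apply/allP=> u up1; rewrite !inE (allP allp1 _ up1) andbT.
  by apply: contraNneq wr => <-; rewrite inE up1 orbT.
- by rewrite rcons_path pp1.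
- by rewrite last_rcons.
Qed.

Lemma separator_unique v w x1 x2 x3 :
  separates A e v x1 x2 x3 -> separates A e w x1 x2 x3 -> w = v.
Proof.
move=> [vA x1v x2v x3v [n12 n13 n23]] [wA x1w x2w x3w [m12 m13 m23]].
apply/eqP/negPn/negP => wv.
have to_v x : x \in A :\ w -> ~ connected_in (A :\ v) e w x ->
    connected_in (A :\ w) e v x.
  rewrite inE => /andP[_ xA] nwx.
  case: (disconnected_split wA xA nwx wv) => // /connected_in_mem [].
  by rewrite !inE eqxx.
have via_w x y : connected_in (A :\ v) e w x -> connected_in (A :\ v) e w y ->
    connected_in (A :\ v) e x y.
  by move=> cx; apply: connected_in_trans (connected_in_sym tree_edgeC cx).
have via_v x y : x \in A :\ w -> y \in A :\ w ->
    ~ connected_in (A :\ v) e w x -> ~ connected_in (A :\ v) e w y ->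
    connected_in (A :\ w) e x y.
  move=> xw yw nx ny; apply: connected_in_trans (to_v y yw ny).
  exact: connected_in_sym tree_edgeC (to_v x xw nx).
(* By pigeonhole two of the [x_i] are on the same side of both cuts. *)
case: (classic (connected_in (A :\ v) e w x1)) => c1;
case: (classic (connected_in (A :\ v) e w x2)) => c2;
case: (classic (connected_in (A :\ v) e w x3)) => c3.
all: first [ exact: n12 (via_w _ _ c1 c2) | exact: n13 (via_w _ _ c1 c3)
           | exact: n23 (via_w _ _ c2 c3) | exact: m12 (via_v _ _ x1w x2w c1 c2)
           | exact: m13 (via_v _ _ x1w x3w c1 c3) | exact: m23 (via_v _ _ x2w x3w c2 c3) ].
Qed.

End Tree.

Section Separation.
Variables (V : finType) (A : {set V}) (e : rel V).

Lemma separates_neq v x y z :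
  separates A e v x y z -> [/\ x != y, x != z & y != z].
Proof.
case=> _ xA _ zA [nxy nxz nyz].
by split; apply/eqP=> E; subst; [apply: nxy | apply: nxz | apply: nyz];
  apply: connected_in_refl.
Qed.

Hypothesis eC : symmetric e.

Lemma separates_swap12 v x y z : separates A e v x y z -> separates A e v y x z.
Proof.
case=> vA xA yA zA [nxy nxz nyz]; split=> //; split=> //.
by move/(connected_in_sym eC).
Qed.

Lemma separates_swap23 v x y z : separates A e v x y z -> separates A e v x z y.
Proof.
case=> vA xA yA zA [nxy nxz nyz]; split=> //; split=> //.
by move/(connected_in_sym eC).
Qed.

End Separation.

Section Stable.
Variables (V : finType) (A : {set V}) (e : rel V).
Hypothesis stable : stable_tree A e.

Lemma stable_third_neighbor w a b :
  e w a -> e w b -> a != b -> exists u, [/\ e w u, u != a & u != b].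
Proof.
case: stable => tree deg3 ewa ewb ab.
have [/existsP[u /and3P[ewu ua ub]]|/existsPn none] :=
  boolP [exists u, [&& e w u, u != a & u != b]]; first by exists u.
have wA : w \in A by case/andP: (tree_edge_mem tree ewa).
have card_ab : #|[set a; b]| = 2 by rewrite cards2 ab.
have ge2 : 2 <= valence e w.
  rewrite -card_ab; apply: subset_leq_card.
  by apply/subsetP=> u; rewrite !inE => /orP[]/eqP->.
have le2 : valence e w <= 2.
  rewrite -card_ab; apply: subset_leq_card; apply/subsetP=> u; rewrite !inE => ewu.
  by move: (none u); rewrite ewu /= negb_and !negbK => /orP[]->; rewrite ?orbT.
have /deg3 ge3 : w \in internals A e by rewrite inE wA; apply: contraTneq ge2 => ->.
by have := leq_trans ge3 le2.
Qed.

Lemma stable_separates_third w x y : w \in A -> x \in A :\ w -> y \in A :\ w ->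
  ~ connected_in (A :\ w) e x y -> exists u, separates A e w x y u.
Proof.
case: (stable) => tree _ wA xw yw nxy.
have [n1 b1] := branch_exists tree wA xw.
have [n2 b2] := branch_exists tree wA yw.
have n12 : n1 != n2.
  apply/eqP=> E; subst n2; apply: nxy; case: b1 b2 => _ c1 [_ c2].
  exact: connected_in_trans c1 (connected_in_sym (tree_edgeC tree) c2).
have [u [ewu un1 un2]] := stable_third_neighbor b1.1 b2.1 n12.
have uw : u \in A :\ w.
  rewrite !inE (andP (tree_edge_mem tree ewu)).2 andbT.
  by apply: contraTneq ewu => ->; apply: tree_edge_irr tree w.
have bu : in_branch A e w u u by split=> //; apply: connected_in_refl.
exists u; split=> //; split=> //.
- by apply: (branches_disconnected tree b1 bu); rewrite eq_sym.
- by apply: (branches_disconnected tree b2 bu); rewrite eq_sym.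
Qed.

End Stable.

Lemma compatible_separates_connected (V : finType) (AX AY X Y : {set V})
    (eX eY : rel V) v w x y :
  stable_tree AX eX -> is_tree AY eY -> compatible AX eX X AY eY Y ->
  separates AY eY v w x y -> w \in AX -> x \in AX -> y \in AX ->
  connected_in (AX :\ w) eX x y.
Proof.
move=> stX trY [_ _ sepXY] sepY wX xX yX.
have [wx wy _] := separates_neq sepY.
apply: NNPP => nxy.
have xw : x \in AX :\ w by rewrite !inE xX andbT eq_sym.
have yw : y \in AX :\ w by rewrite !inE yX andbT eq_sym.
have [u sepX] := stable_separates_third stX wX xw yw nxy.
have uX : u \in AX by case: sepX => _ _ _ /setD1P[].
have [_ /setD1P[_ xY] /setD1P[_ yY] _ [nxyY _ _]] := (sepXY w x y u wX xX yX uX).1 sepX.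
case: sepY => _ /setD1P[wv _] _ _ [nwx nwy _].
have vw : v != w by rewrite eq_sym.
case: (disconnected_split trY xY yY nxyY vw) => [cxw|cwy].
  by apply: nwx; apply: connected_in_sym (tree_edgeC trY) cxw.
exact: nwy cwy.
Qed.

Theorem lemma3p4 (V : finType) (AX AY X Y : {set V}) (eX eY : rel V) :
  stable_tree AX eX -> marked_tree AX eX X ->
  stable_tree AY eY -> marked_tree AY eY Y ->
  compatible AX eX X AY eY Y ->
  forall v v1 v2 v3 : V,
    v \in internals AY eY ->
    v1 \in AX -> v2 \in AX -> v3 \in AX ->
    separates AY eY v v1 v2 v3 ->
    v \in AX.
Proof.
move=> stX _ stY _ compat v v1 v2 v3 _ v1X v2X v3X sepY.
have [trX trY] := (stX.1, stY.1).
have eYC := tree_edgeC trY.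
have cut := compatible_separates_connected stX trY compat.
have [w wX [m12 m13 m23]] := exists_median trX v1X v2X v3X.
have [n12 n13 n23] := separates_neq sepY.
have [?|v1w] := eqVneq v1 w; first subst w.
  exfalso; apply: (m23 _ _ (cut _ _ _ _ sepY v1X v2X v3X)); by rewrite eq_sym.
have [?|v2w] := eqVneq v2 w; first subst w.
  have sepY' := separates_swap12 eYC sepY.
  exfalso; apply: (m13 _ _ (cut _ _ _ _ sepY' v2X v1X v3X)); by rewrite // eq_sym.
have [?|v3w] := eqVneq v3 w; first subst w.
  have sepY' := separates_swap12 eYC (separates_swap23 eYC sepY).
  exfalso; apply: (m12 _ _ (cut _ _ _ _ sepY' v3X v1X v2X)); by rewrite // eq_sym.
have sepX : separates AX eX w v1 v2 v3.
  split; rewrite ?inE ?v1X ?v2X ?v3X ?v1w ?v2w ?v3w //.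
  by split; [exact: m12 | exact: m13 | exact: m23].
case: compat => _ _ sepXY.
by rewrite -(separator_unique trY sepY ((sepXY w v1 v2 v3 wX v1X v2X v3X).1 sepX)).
Qed.
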